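(* Let $r\geqslant 2$ and let $\mathcal{G}$ be a Newton graph of order $r$ on the torus $T$, with vertices $v_1,\dots,v_r$, faces $F_{r+1},\dots,F_{r+r}$, and edges $e_1,\dots,e_{2r}$. Let $\mathcal{G}^{*}$ be a geometric dual of $\mathcal{G}$, with vertex $v^{*}_{r+i}$ lying in $F_{r+i}$ and edge $e_k^{*}$ the dual edge crossing $e_k$. Put $\delta_i=\deg(v_i)$ and $\delta_i^{*}=\deg(v^{*}_{r+i})$, $i=1,\dots,r$. Then $$1<\delta_i\leqslant 2r,\qquad 1<\delta^{*}_i\leqslant 2r\quad (i=1,\dots,r),\qquad \sum_{i=1}^{r}\delta_i=\sum_{i=1}^{r}\delta^{*}_i=4r.$$ Moreover, the common refinement $\mathcal{G}\wedge\mathcal{G}^{*}$ has precisely $4r$ faces, and no vertex $s_k$ of $\mathcal{G}\wedge\mathcal{G}^{*}$ is connected by two edges of $\mathcal{G}\wedge\mathcal{G}^{*}$ to the same vertex $v_i$ or to the same vertex $v^{*}_{r+i}$.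
   Context: All graphs are cellular embeddings in the torus $T$ (each face homeomorphic to an open disk) of connected abstract multigraphs without loops, having $r$ vertices, $2r$ edges and hence $r$ faces; $r$ is the order. Such a graph has the E(Euler)-property if the boundary of each face, as a subgraph, is Eulerian: it admits a closed facial walk traversing each of its edges exactly once and passing through all its vertices (equivalently, every edge lies on the boundaries of two different faces, each traversed once). It has the A(angle)-property if to every sector of a face at a vertex on its boundary one can assign a well-defined strictly positive angle such that these angles sum up to $2\pi$ (around each vertex, and over the sectors of each face). A Newton graph is such a graph having both the A-property and the E-property. The geometric dual $\mathcal{G}^{*}$ has one vertex in each face of $\mathcal{G}$ and one edge $e_k^{*}$ crossing each edge $e_k$ of $\mathcal{G}$ exactly once; $\mathcal{G}^{*}$ is again a Newton graph of order $r$. The common refinement $\mathcal{G}\wedge\mathcal{G}^{*}$ is the embedded graph whose vertices are the vertices $v_i$ of $\mathcal{G}$, the crossing points $s_k$ of $e_k$ and $e_k^{*}$ ($k=1,\dots,2r$), and the vertices $v^{*}_{r+i}$ of $\mathcal{G}^{*}$; each $e_k$ (resp. $e_k^{*}$) is split into two edges of $\mathcal{G}\wedge\mathcal{G}^{*}$ joining $s_k$ to the two end vertices of $e_k$ (resp. $e_k^{*}$), and there are no other edges. *)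

From HB Require Import structures.
From Stdlib Require Import Reals.
From mathcomp Require Import all_boot all_order all_algebra all_fingroup.
From mathcomp Require Import Rstruct.
Set Implicit Arguments. Unset Strict Implicit. Unset Printing Implicit Defensive.
Import GRing.Theory Num.Theory.

(* Combinatorial (oriented) maps = cellular embeddings of connected multigraphs in
   orientable closed surfaces.  Darts (half-edges) form a finite type D;
   [alpha] pairs the two darts of an edge, [sigma] is the counterclockwise rotation
   of darts around their vertex.  The face orbit of a dart
   x is the face lying to the right of x; the sector (angle) indexed by x is the
   sector at the vertex of x between sigma^-1 x and x, which lies in the face of x. *)

Section Maps.
Variable D : finType.
Variables alpha sigma : {perm D}.

(* (alpha * sigma) x = sigma (alpha x) *)
Definition face_perm : {perm D} := (alpha * sigma)%g.

Definition vertices := porbits sigma.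
Definition faces := porbits face_perm.

Definition is_map : Prop :=
  (forall x, alpha x != x) /\ (forall x, alpha (alpha x) = x) /\
  (forall x y, connect (fun u v => (v == alpha u) || (v == sigma u)) x y).

(* A connected loopless multigraph cellularly embedded in the torus, with r vertices,
   2r edges (4r darts) and r faces (Euler characteristic r - 2r + r = 0, orientable:
   the torus). *)
Definition torus_graph (r : nat) : Prop :=
  [/\ is_map, #|D| = 4 * r, #|vertices| = r, #|faces| = r &
      (forall x, alpha x \notin porbit sigma x) (* no loops *) ].

(* E-property: every edge lies on the boundaries of two different faces. *)
Definition E_property : Prop := forall x, alpha x \notin porbit face_perm x.

Local Open Scope ring_scope.
Definition A_property : Prop :=
  exists ang : D -> R,
    [/\ forall x, 0 < ang x,
        forall x, \sum_(y in porbit sigma x) ang y = 2 * PI &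
        forall x, \sum_(y in porbit face_perm x) ang y = 2 * PI].
Local Close Scope ring_scope.

Definition newton_graph (r : nat) : Prop :=
  [/\ torus_graph r, E_property & A_property].

(* Geometric dual: same darts, dart x of the dual being the half of the dual edge
   crossing the edge of x that lies in the face of x; vertex rotation is the
   (counterclockwise) face traversal face_perm^-1. *)
Definition dual_sigma : {perm D} := (face_perm^-1)%g.
Definition dual_vertices := porbits dual_sigma.

(* Darts:
     inl (inl d) = P d : at v(d), half of e(d) towards the crossing point s_{e(d)};
     inl (inr d) = Q d : at s_{e(d)}, towards v(d);
     inr (inl d) = R d : at the dual vertex of the face of d, towards s_{e(d)};
     inr (inr d) = S d : at s_{e(d)}, towards the dual vertex of the face of d. *)
Definition rdart := ((D + D) + (D + D))%type.

Definition ref_alpha_fun (z : rdart) : rdart :=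
  match z with
  | inl (inl d) => inl (inr d)
  | inl (inr d) => inl (inl d)
  | inr (inl d) => inr (inr d)
  | inr (inr d) => inr (inl d)
  end.

Lemma ref_alpha_funK : involutive ref_alpha_fun.
Proof. by case=> [[]|[]]. Qed.

Definition ref_alpha : {perm rdart} := perm (inv_inj ref_alpha_funK).

Definition ref_sigma_fun (z : rdart) : rdart :=
  match z with
  | inl (inl d) => inl (inl (sigma d))
  | inl (inr d) => inr (inr d)
  | inr (inr d) => inl (inr (alpha d))
  | inr (inl d) => inr (inl (dual_sigma d))
  end.

Definition ref_sigma_inv (z : rdart) : rdart :=
  match z with
  | inl (inl d) => inl (inl ((sigma^-1)%g d))
  | inr (inr d) => inl (inr d)
  | inl (inr d) => inr (inr ((alpha^-1)%g d))
  | inr (inl d) => inr (inl ((dual_sigma^-1)%g d))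
  end.

Lemma ref_sigma_funK : cancel ref_sigma_fun ref_sigma_inv.
Proof. by case=> [[]|[]] d /=; rewrite ?permK. Qed.

Definition ref_sigma : {perm rdart} := perm (can_inj ref_sigma_funK).

Definition ref_face_perm : {perm rdart} := (ref_alpha * ref_sigma)%g.
Definition ref_faces := porbits ref_face_perm.

Definition crossing_vertex (d : D) : {set rdart} := porbit ref_sigma (inl (inr d)).

End Maps.

From HB Require Import structures.
From mathcomp Require Import all_boot all_order all_algebra all_fingroup.
From mathcomp Require Import zify.

Set Implicit Arguments. Unset Strict Implicit. Unset Printing Implicit Defensive.

(* A vertex of G (a sigma-orbit) has at least two darts, since a fixed dart x
   of sigma would put both sides of the edge of x on one face, against the
   E-property; dually a fixed dart of the face permutation would be a loop.
   An orbit has at most half of the 4r darts, because alpha maps it into its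
   complement (no loops, resp. the E-property), and the orbits of any
   permutation partition the darts, which gives the degree sums.
   Each face of G /\ G* is a quadrangle v, s, v*, s' containing exactly one
   dart based at a vertex of G, so the faces correspond to the 4r darts.
   Finally, the four edges at a crossing s_k lead to the two ends of e_k and
   to the two dual vertices of the faces beside e_k; these are four different
   vertices, again by the absence of loops and the E-property. *)

Section PermOrbits.
Variable T : finType.
Implicit Types (s a : {perm T}) (x y : T).

Lemma porbit_subset s (X : {set T}) x :
  x \in X -> {in X, forall y, s y \in X} -> porbit s x \subset X.
Proof.
move=> Xx sX; apply/subsetP=> _ /porbitP[i ->]; elim: i => [|i IHi].
  by rewrite expg0 perm1.
by rewrite expgSr permM sX.
Qed.

Lemma mem_porbit1 s x : s x \in porbit s x.
Proof. by have := mem_porbit s 1 x; rewrite expg1. Qed.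

Lemma porbit_perm1 s x : porbit s (s x) = porbit s x.
Proof. by apply/eqP; rewrite eq_porbit_mem mem_porbit1. Qed.

Lemma card_porbit_gt1 s x : s x != x -> 1 < #|porbit s x|.
Proof.
move=> sx_neq_x; have sub : [set x; s x] \subset porbit s x.
  by apply/subsetP=> y; rewrite !inE => /orP[]/eqP->; rewrite ?porbit_id ?mem_porbit1.
by have := subset_leq_card sub; rewrite cards2 eq_sym sx_neq_x.
Qed.

Lemma double_card_porbit_le s a x :
  (forall y, a y \notin porbit s y) -> 2 * #|porbit s x| <= #|T|.
Proof.
move=> a_out; set V := porbit s x.
have aV_sub : a @: V \subset ~: V.
  apply/subsetP=> _ /imsetP[y Vy ->]; rewrite inE.
  by have /eqP <- : porbit s y == V by rewrite eq_porbit_mem.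
have := subset_leq_card aV_sub; rewrite card_imset; last exact: perm_inj.
by have := cardsC V; lia.
Qed.

Lemma porbits_partition s : partition (porbits s) [set: T].
Proof.
have -> : porbits s = preim_partition (porbit s) [set: T].
  apply/setP=> V; apply/imsetP/imsetP=> -[x _ ->]; exists x => //;
    by apply/setP=> y; rewrite !inE eq_sym eq_porbit_mem.
exact: preim_partitionP.
Qed.

Lemma sum_card_porbits s : \sum_(V in porbits s) #|V| = #|T|.
Proof. by rewrite -(card_partition (porbits_partition s)) cardsT. Qed.

Lemma porbit_morph (U : finType) s (t : {perm U}) (f : T -> U) x :
  (forall y, t (f y) = f (s y)) -> porbit t (f x) = f @: porbit s x.
Proof.
move=> fM; have fMX i : (t ^+ i)%g (f x) = f ((s ^+ i)%g x).
  by elim: i => [|i IHi]; rewrite ?expg0 ?perm1 // !expgSr !permM IHi fM.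
apply/setP=> u; apply/porbitP/imsetP=> [[i ->] | [_ /porbitP[i ->] ->]].
  by exists ((s ^+ i)%g x); rewrite ?mem_porbit.
by exists i.
Qed.

End PermOrbits.

Section NewtonMaps.
Variable D : finType.
Variables alpha sigma : {perm D}.
Hypothesis alphaK : involutive alpha.
Hypothesis loopless : forall x, alpha x \notin porbit sigma x.
Hypothesis E_prop : E_property alpha sigma.

Local Notation fp := (face_perm alpha sigma).
Local Notation ds := (dual_sigma alpha sigma).
Local Notation rs := (ref_sigma alpha sigma).
Local Notation rf := (ref_face_perm alpha sigma).

Local Notation P_ d := (inl (inl d) : rdart D).
Local Notation Q_ d := (inl (inr d) : rdart D).
Local Notation R_ d := (inr (inl d) : rdart D).
Local Notation S_ d := (inr (inr d) : rdart D).

Lemma face_permE x : fp x = sigma (alpha x).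
Proof. by rewrite permM. Qed.

Lemma porbit_dual_sigma : porbit ds =1 porbit fp.
Proof. exact: porbitV. Qed.

Lemma sigma_fixfree x : sigma x != x.
Proof.
apply/eqP=> sx; have fp_ax : fp (alpha x) = x by rewrite face_permE alphaK sx.
by have := E_prop x; rewrite porbit_sym -{1}fp_ax mem_porbit1.
Qed.

Lemma face_perm_fixfree x : fp x != x.
Proof.
rewrite face_permE; apply/eqP=> sax.
by have := loopless x; rewrite porbit_sym -{1}sax mem_porbit1.
Qed.

Lemma vertex_degree_bounds V :
  V \in vertices sigma -> 1 < #|V| /\ 2 * #|V| <= #|D|.
Proof.
case/imsetP=> x _ ->; split; first exact/card_porbit_gt1/sigma_fixfree.
exact: (double_card_porbit_le x loopless).
Qed.

Lemma dual_vertex_degree_bounds V :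
  V \in dual_vertices alpha sigma -> 1 < #|V| /\ 2 * #|V| <= #|D|.
Proof.
case/imsetP=> x _ ->; rewrite porbit_dual_sigma; split.
  exact/card_porbit_gt1/face_perm_fixfree.
exact: (double_card_porbit_le x E_prop).
Qed.

Lemma ref_sigmaE z : rs z = ref_sigma_fun alpha sigma z.
Proof. exact: permE. Qed.

Lemma ref_face_permE z : rf z = ref_sigma_fun alpha sigma (ref_alpha_fun z).
Proof. by rewrite permM !permE. Qed.

Lemma ref_face_subset d :
  porbit rf (P_ d) \subset [set P_ d; S_ d; R_ (ds d); Q_ (alpha (ds d))].
Proof.
have fp_ds e : sigma (alpha (ds e)) = e by rewrite -face_permE permKV.
apply: porbit_subset; first by rewrite !inE eqxx.
by move=> z; rewrite !inE -!orbA => /or4P[]/eqP->; rewrite ref_face_permE /= ?fp_ds eqxx ?orbT.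
Qed.

Lemma ref_facesE : ref_faces alpha sigma = [set porbit rf (P_ d) | d in D].
Proof.
apply/setP=> F; apply/imsetP/imsetP=> [[z _ ->] | [d _ ->]]; last by exists (P_ d).
case: z => [[d|d]|[d|d]].
- by exists d.
- exists (fp (alpha d)) => //.
  have -> : Q_ d = rf (rf (rf (P_ (fp (alpha d))))).
    by rewrite !ref_face_permE /= permK alphaK.
  by rewrite !porbit_perm1.
- exists (fp d) => //.
  have -> : R_ d = rf (rf (P_ (fp d))) by rewrite !ref_face_permE /= permK.
  by rewrite !porbit_perm1.
- exists d => //.
  by rewrite -(porbit_perm1 rf (P_ d)) ref_face_permE.
Qed.

Lemma card_ref_faces : #|ref_faces alpha sigma| = #|D|.
Proof.
rewrite ref_facesE card_imset // => d d' same_face.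
have := porbit_id rf (P_ d'); rewrite -same_face => /(subsetP (ref_face_subset d)).
by rewrite !inE -!orbA => /or4P[]/eqP// [->].
Qed.

Lemma porbit_ref_sigma_vertex d : porbit rs (P_ d) = [set P_ e | e in porbit sigma d].
Proof. by apply: porbit_morph => e; rewrite ref_sigmaE. Qed.

Lemma porbit_ref_sigma_dual_vertex d :
  porbit rs (R_ d) = [set R_ e | e in porbit ds d].
Proof. by apply: porbit_morph => e; rewrite ref_sigmaE. Qed.

Lemma ref_vertex_neq a b :
  porbit sigma a != porbit sigma b -> porbit rs (P_ a) != porbit rs (P_ b).
Proof.
apply: contra => /eqP; rewrite !porbit_ref_sigma_vertex.
by move/imset_inj=> -> // e e' [].
Qed.

Lemma ref_dual_vertex_neq a b :
  porbit fp a != porbit fp b -> porbit rs (R_ a) != porbit rs (R_ b).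
Proof.
rewrite -!porbit_dual_sigma; apply: contra => /eqP.
by rewrite !porbit_ref_sigma_dual_vertex; move/imset_inj=> -> // e e' [].
Qed.

Lemma ref_vertex_neq_dual a b : porbit rs (P_ a) != porbit rs (R_ b).
Proof.
rewrite eq_porbit_mem porbit_ref_sigma_dual_vertex.
by apply/imsetP=> -[].
Qed.

Lemma crossing_vertex_subset d :
  crossing_vertex alpha sigma d \subset [set Q_ d; S_ d; Q_ (alpha d); S_ (alpha d)].
Proof.
apply: porbit_subset; first by rewrite !inE eqxx.
by move=> z; rewrite !inE -!orbA => /or4P[]/eqP->; rewrite ref_sigmaE /= ?alphaK eqxx ?orbT.
Qed.

Lemma crossing_vertex_neighbours_neq d (x y : rdart D) :
  x \in crossing_vertex alpha sigma d -> y \in crossing_vertex alpha sigma d ->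
  x != y -> porbit rs (ref_alpha D x) != porbit rs (ref_alpha D y).
Proof.
have ends_neq : porbit sigma (alpha d) != porbit sigma d by rewrite eq_porbit_mem.
have sides_neq : porbit fp (alpha d) != porbit fp d by rewrite eq_porbit_mem.
have ends_neq' := ends_neq; rewrite eq_sym in ends_neq'.
have sides_neq' := sides_neq; rewrite eq_sym in sides_neq'.
move=> /(subsetP (crossing_vertex_subset d)) + /(subsetP (crossing_vertex_subset d)).
rewrite !inE -!orbA => /or4P[]/eqP-> /or4P[]/eqP->; rewrite ?eqxx // => _; rewrite !permE /=;
  by [ exact: ref_vertex_neq_dual | rewrite eq_sym; exact: ref_vertex_neq_dual
     | exact: ref_vertex_neq | exact: ref_dual_vertex_neq ].
Qed.

End NewtonMaps.

Theorem lemma2p1 (r : nat) (D : finType) (alpha sigma : {perm D}) :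
  2 <= r ->
  newton_graph alpha sigma r ->
  [/\ (forall V, V \in vertices sigma -> 1 < #|V| <= 2 * r),
      (forall V, V \in dual_vertices alpha sigma -> 1 < #|V| <= 2 * r),
      \sum_(V in vertices sigma) #|V| = 4 * r /\
        \sum_(V in dual_vertices alpha sigma) #|V| = 4 * r,
      #|ref_faces alpha sigma| = 4 * r &
      (forall (d : D) (x y : rdart D),
          x \in crossing_vertex alpha sigma d ->
          y \in crossing_vertex alpha sigma d -> x != y ->
          porbit (ref_sigma alpha sigma) (ref_alpha D x)
            != porbit (ref_sigma alpha sigma) (ref_alpha D y))].
Proof.
move=> _ [[[_ [alphaK _]] cardD _ _ loopless] E_prop _].
split.
- move=> V /(vertex_degree_bounds alphaK loopless E_prop) []; rewrite cardD; lia.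
- move=> V /(dual_vertex_degree_bounds loopless E_prop) []; rewrite cardD; lia.
- by rewrite /vertices /dual_vertices !sum_card_porbits cardD.
- by rewrite card_ref_faces.
- exact: (crossing_vertex_neighbours_neq alphaK loopless E_prop).
Qed.
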